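(* Let $\mathcal{M}\subseteq\mathbb{S}^n$ be any set. The following are equivalent: (1) $\mathcal{S}(\mathcal{M})$ is rank-one generated; (2) every face of $\mathcal{S}(\mathcal{M})$ is rank-one generated; (3) $\mathcal{S}(\mathcal{M})\cap\mathcal{T}(\mathcal{M}')$ is rank-one generated for every $\mathcal{M}'\subseteq\mathcal{M}$.
   Context: $\mathbb{S}^n$ denotes real symmetric $n\times n$ matrices with $\langle A,B\rangle=\mathrm{tr}(AB)$, $\mathbb{S}^n_+$ the PSD cone. For $\mathcal{M}\subseteq\mathbb{S}^n$, $\mathcal{S}(\mathcal{M})=\{X\in\mathbb{S}^n_+:\langle M,X\rangle\ge0\ \forall M\in\mathcal{M}\}$ and $\mathcal{T}(\mathcal{M})=\{X\in\mathbb{S}^n_+:\langle M,X\rangle=0\ \forall M\in\mathcal{M}\}$ (so $\mathcal{T}(\emptyset)=\mathbb{S}^n_+$). A closed convex cone $\mathcal{S}\subseteq\mathbb{S}^n_+$ is rank-one generated (ROG) if $\mathcal{S}=\mathrm{conv}(\mathcal{S}\cap\{xx^\top:x\in\mathbb{R}^n\})$. *)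

From HB Require Import structures.
From mathcomp Require Import all_boot all_order all_algebra.
From mathcomp Require Import classical_sets reals.
Set Implicit Arguments. Unset Strict Implicit. Unset Printing Implicit Defensive.
Import Order.TTheory GRing.Theory Num.Theory.
Local Open Scope ring_scope.
Local Open Scope classical_set_scope.

Section Defs.
Variables (R : realType) (n : nat).

Definition symm_mx (X : 'M[R]_n) : Prop := X^T = X.

Definition frob (A B : 'M[R]_n) : R := \tr (A *m B).

Definition psd : set 'M[R]_n :=
  [set X | symm_mx X /\ forall x : 'cV[R]_n, 0 <= (x^T *m X *m x) 0 0].

Definition Scone (M : set 'M[R]_n) : set 'M[R]_n :=
  [set X | psd X /\ forall A, M A -> 0 <= frob A X].

Definition Tcone (M : set 'M[R]_n) : set 'M[R]_n :=
  [set X | psd X /\ forall A, M A -> frob A X = 0].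

Definition rank_one_mats : set 'M[R]_n := [set X | exists x : 'cV[R]_n, X = x *m x^T].

Definition conv (A : set 'M[R]_n) : set 'M[R]_n :=
  [set X | exists (k : nat) (lam : 'I_k -> R) (P : 'I_k -> 'M[R]_n),
     (forall i, 0 <= lam i) /\ \sum_(i < k) lam i = 1 /\
     (forall i, A (P i)) /\ X = \sum_(i < k) lam i *: P i].

Definition convex_set (C : set 'M[R]_n) : Prop :=
  forall x y (t : R), C x -> C y -> 0 <= t <= 1 -> C (t *: x + (1 - t) *: y).

Definition face (F C : set 'M[R]_n) : Prop :=
  F `<=` C /\ convex_set F /\
  forall x y (t : R), C x -> C y -> 0 < t < 1 -> F (t *: x + (1 - t) *: y) ->
    F x /\ F y.

Definition ROG (S : set 'M[R]_n) : Prop := S = conv (S `&` rank_one_mats).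

End Defs.

(* A face F of a convex set C that is the convex hull of its rank-one points
   is the convex hull of its own rank-one points: if a point of F is a convex
   combination of points of C, every point of positive weight lies in F (split
   it off from the others and apply the face property once).  Now S(M) is a
   face of itself, and S(M) ∩ T(M') is a face of S(M) for M' ⊆ M, since each
   <A, .> with A ∈ M' is nonnegative on S(M) and hence vanishes inside a
   segment only if it vanishes at both endpoints.  Conversely (2) and (3)
   contain (1) by taking F = S(M), resp. M' = ∅. *)

From HB Require Import structures.
From mathcomp Require Import all_boot all_order all_algebra.
From mathcomp Require Import classical_sets reals.
Set Implicit Arguments.
Unset Strict Implicit.
Unset Printing Implicit Defensive.
Import Order.TTheory GRing.Theory Num.Theory.
Local Open Scope ring_scope.
Local Open Scope classical_set_scope.

Section ConvexCombinations.
Variables (R : realType) (n : nat) (k : nat).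
Variables (lam : 'I_k -> R) (P : 'I_k -> 'M[R]_n).
Hypotheses (lam_ge0 : forall i, 0 <= lam i) (lam_sum1 : \sum_(i < k) lam i = 1).

Lemma sum_weights_neq (i : 'I_k) : \sum_(j | j != i) lam j = 1 - lam i.
Proof. by rewrite -lam_sum1 [X in _ = X - _](bigD1 i) //= addrC addrK. Qed.

Lemma weight_le1 (i : 'I_k) : lam i <= 1.
Proof.
by rewrite -subr_ge0 -sum_weights_neq; apply: sumr_ge0 => j _; exact: lam_ge0.
Qed.

Lemma exists_weight_gt0 : exists i, 0 < lam i.
Proof.
apply/existsP; apply: contraT => /existsPn all_le0.
have : \sum_(i < k) lam i <= 0.
  by apply: sumr_le0 => i _; rewrite leNgt all_le0.
by rewrite lam_sum1 ler10.
Qed.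

Lemma convex_comb_weight1 (i : 'I_k) :
  lam i = 1 -> \sum_(j < k) lam j *: P j = P i.
Proof.
move=> lam_i1; have := sum_weights_neq i; rewrite lam_i1 subrr => others0.
have lam0 j : j != i -> lam j = 0.
  by move=> ji; apply: (psumr_eq0P (fun j _ => lam_ge0 j) others0).
rewrite (bigD1 i) //= lam_i1 scale1r big1 ?addr0 // => j ji.
by rewrite lam0 // scale0r.
Qed.

Definition drop_weight (i : 'I_k) (j : 'I_k) : R :=
  if j == i then 0 else lam j / (1 - lam i).

Section DropWeight.
Variable i : 'I_k.
Hypothesis lam_i_lt1 : lam i < 1.

Let compl_gt0 : 0 < 1 - lam i. Proof. by rewrite subr_gt0. Qed.

Lemma drop_weight_ge0 j : 0 <= drop_weight i j.
Proof.
by rewrite /drop_weight; case: eqP => // _; exact: divr_ge0 (lam_ge0 j) (ltW compl_gt0).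
Qed.

Lemma drop_weight_at : drop_weight i i = 0.
Proof. by rewrite /drop_weight eqxx. Qed.

Lemma drop_weight_sum1 : \sum_(j < k) drop_weight i j = 1.
Proof.
rewrite (bigD1 i) //= drop_weight_at add0r.
rewrite (eq_bigr (fun j => lam j / (1 - lam i))) => [|j /negbTE ji]; last first.
  by rewrite /drop_weight ji.
by rewrite -mulr_suml sum_weights_neq mulfV // gt_eqF.
Qed.

Lemma convex_comb_drop :
  \sum_(j < k) lam j *: P j =
  lam i *: P i + (1 - lam i) *: \sum_(j < k) drop_weight i j *: P j.
Proof.
rewrite (bigD1 i) //= [X in _ = _ + _ *: X](bigD1 i) //=.
rewrite drop_weight_at scale0r add0r.
congr (_ + _); rewrite scaler_sumr; apply: eq_bigr => j /negbTE ji.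
by rewrite /drop_weight ji scalerA mulrC -mulrA mulVf ?mulr1 // gt_eqF.
Qed.

End DropWeight.
End ConvexCombinations.

Section Faces.
Variables (R : realType) (n : nat).
Implicit Types (A C F : set 'M[R]_n).

Lemma conv_sub_convex A C : convex_set C -> A `<=` C -> conv A `<=` C.
Proof.
move=> convC AC X [k [lam [P [lam_ge0 [lam_sum1 [PA ->]]]]]].
elim: k => [|k IHk] in lam P lam_ge0 lam_sum1 PA *.
  by move: lam_sum1; rewrite big_ord0 => /eqP; rewrite eq_sym oner_eq0.
have [lam_max1|lam_max_lt1] := eqVneq (lam ord_max) 1.
  by rewrite (convex_comb_weight1 P lam_ge0 lam_sum1 lam_max1); exact: AC.
have {}lam_max_lt1 : lam ord_max < 1 by rewrite lt_neqAle lam_max_lt1 weight_le1.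
rewrite (convex_comb_drop P lam_max_lt1).
apply: convC; [exact: AC | | by rewrite lam_ge0 weight_le1].
rewrite big_ord_recr /= drop_weight_at scale0r addr0.
apply: IHk => [i||i]; [exact: drop_weight_ge0 | | exact: PA].
rewrite -(drop_weight_sum1 lam_sum1 lam_max_lt1).
by rewrite big_ord_recr /= drop_weight_at addr0.
Qed.

Lemma face_convex_comb C F k (lam : 'I_k -> R) (P : 'I_k -> 'M[R]_n) :
  convex_set C -> face F C ->
  (forall i, 0 <= lam i) -> \sum_(i < k) lam i = 1 -> (forall i, C (P i)) ->
  F (\sum_(i < k) lam i *: P i) -> forall i, 0 < lam i -> F (P i).
Proof.
move=> convC [_ [_ faceF]] lam_ge0 lam_sum1 PC FX i lam_i_gt0.
have [lam_i1|lam_i_lt1] := eqVneq (lam i) 1.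
  by rewrite -(convex_comb_weight1 P lam_ge0 lam_sum1 lam_i1).
have {}lam_i_lt1 : lam i < 1 by rewrite lt_neqAle lam_i_lt1 weight_le1.
have C_rest : C (\sum_(j < k) drop_weight lam i j *: P j).
  apply: (conv_sub_convex convC (@subset_refl _ C)).
  exists k, (drop_weight lam i), P; split; first exact: drop_weight_ge0.
  by split; first exact: drop_weight_sum1.
rewrite (convex_comb_drop P lam_i_lt1) in FX.
have lam_i_01 : 0 < lam i < 1 by rewrite lam_i_gt0 lam_i_lt1.
by have [] := faceF _ _ _ (PC i) C_rest lam_i_01 FX.
Qed.

Lemma face_ROG C F : convex_set C -> ROG C -> face F C -> ROG F.
Proof.
move=> convC ROG_C faceFC; have [FC [convF _]] := faceFC.
apply/seteqP; split; last first.
  by apply: conv_sub_convex convF _; exact: subIsetl.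
move=> X FX; have := FC _ FX; rewrite {1}ROG_C.
move=> -[k [lam [P [lam_ge0 [lam_sum1 [PC1 eX]]]]]].
have PF : forall i, 0 < lam i -> F (P i).
  apply: (face_convex_comb convC faceFC lam_ge0 lam_sum1) => [i|].
    by case: (PC1 i).
  by rewrite -eX.
have [j lam_j_gt0] := exists_weight_gt0 lam_sum1.
(* Points of weight zero need not lie in [F]; replace them by [P j]. *)
exists k, lam, (fun i => if 0 < lam i then P i else P j).
do 3!split=> //.
  move=> i; case: ifP => [lam_i_gt0 | _].
    by split; [exact: PF | case: (PC1 i)].
  by split; [exact: PF | case: (PC1 j)].
rewrite eX; apply: eq_bigr => i _; case: ifP => // /negbT.
rewrite -leNgt => lam_i_le0.
have -> : lam i = 0 by apply/le_anti; rewrite lam_i_le0 lam_ge0.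
by rewrite !scale0r.
Qed.

End Faces.

Section Cones.
Variables (R : realType) (n : nat).
Implicit Types (A X Y : 'M[R]_n) (M : set 'M[R]_n).

Lemma convex_setI (C D : set 'M[R]_n) :
  convex_set C -> convex_set D -> convex_set (C `&` D).
Proof.
by move=> convC convD X Y t [CX DX] [CY DY] t01; split; [apply: convC | apply: convD].
Qed.

Lemma frob_comb A X Y (a b : R) :
  frob A (a *: X + b *: Y) = a * frob A X + b * frob A Y.
Proof. by rewrite /frob mulmxDr -!scalemxAr mxtraceD !mxtraceZ. Qed.

Lemma quad_comb (x : 'cV[R]_n) X Y (a b : R) :
  (x^T *m (a *: X + b *: Y) *m x) 0 0 =
  a * (x^T *m X *m x) 0 0 + b * (x^T *m Y *m x) 0 0.
Proof. by rewrite mulmxDr mulmxDl -!scalemxAr -!scalemxAl !mxE. Qed.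

Lemma psd_convex : convex_set (@psd R n).
Proof.
move=> X Y t [symX psdX] [symY psdY] /andP[t_ge0 t_le1].
have t'_ge0 : 0 <= 1 - t by rewrite subr_ge0.
split; first by rewrite /symm_mx linearD !linearZ /= symX symY.
by move=> x; rewrite quad_comb addr_ge0 // mulr_ge0.
Qed.

Lemma Scone_convex M : convex_set (Scone M).
Proof.
move=> X Y t [psdX SX] [psdY SY] t01; split; first exact: psd_convex.
move: t01 => /andP[t_ge0 t_le1] A MA.
by rewrite frob_comb addr_ge0 // mulr_ge0 ?subr_ge0 ?SX ?SY.
Qed.

Lemma Tcone_convex M : convex_set (Tcone M).
Proof.
move=> X Y t [psdX TX] [psdY TY] t01; split; first exact: psd_convex.
by move=> A MA; rewrite frob_comb TX // TY // !mulr0 addr0.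
Qed.

Lemma open_segment_eq0 (t a b : R) : 0 < t < 1 -> 0 <= a -> 0 <= b ->
  t * a + (1 - t) * b = 0 -> a = 0 /\ b = 0.
Proof.
move=> /andP[t_gt0 t_lt1] a_ge0 b_ge0 /eqP.
have t'_gt0 : 0 < 1 - t by rewrite subr_gt0.
rewrite paddr_eq0 ?mulr_ge0 ?(ltW t_gt0) ?(ltW t'_gt0) //.
rewrite !mulf_eq0 (gt_eqF t_gt0) (gt_eqF t'_gt0) /=.
by move=> /andP[/eqP -> /eqP ->].
Qed.

Lemma Scone_Tcone_face M (M' : set 'M[R]_n) :
  M' `<=` M -> face (Scone M `&` Tcone M') (Scone M).
Proof.
move=> M'M; split; first exact: subIsetl.
split; first exact: convex_setI (@Scone_convex M) (@Tcone_convex M').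
move=> X Y t SX SY t01 [_ [_ TZ]].
have TXY : forall A, M' A -> frob A X = 0 /\ frob A Y = 0.
  move=> A M'A; apply: (open_segment_eq0 t01).
  - exact: SX.2 (M'M _ M'A).
  - exact: SY.2 (M'M _ M'A).
  - by rewrite -frob_comb; exact: TZ.
split; split=> //.
- by split=> [|A /TXY[]]; [exact: SX.1 |].
- by split=> [|A /TXY[]]; [exact: SY.1 |].
Qed.

Lemma Scone_Tcone0 M : Scone M `&` Tcone set0 = Scone M.
Proof. by apply/seteqP; split=> [X []//|X SX]; split=> //; split=> [|A []]; case: SX. Qed.

End Cones.

Theorem lemma2p10 (R : realType) (n : nat) (M : set 'M[R]_n)
  (HM : forall A, M A -> symm_mx A) :
  (ROG (Scone M) <-> (forall F, face F (Scone M) -> ROG F)) /\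
  (ROG (Scone M) <->
     (forall M' : set 'M[R]_n, M' `<=` M -> ROG (Scone M `&` Tcone M'))).
Proof.
have convS : convex_set (Scone M) by exact: Scone_convex.
have faceS : face (Scone M) (Scone M).
  by rewrite -{1}Scone_Tcone0; exact: Scone_Tcone_face (sub0set M).
split; split=> [ROG_S | ROG_faces].
- by move=> F; exact: face_ROG convS ROG_S.
- exact: ROG_faces faceS.
- by move=> M' M'M; exact: face_ROG convS ROG_S (Scone_Tcone_face M'M).
- by rewrite -Scone_Tcone0; exact: ROG_faces (sub0set M).
Qed.
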